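(* Let $n,m\in\mathbb{N}$, $k\in\mathbb{N}$, $p\in\mathbb{N}\cup\{0\}$, and let $F: V(L_n)\to V(D_m)$ satisfy $$4^{p}d_{L_n}(u,v)\le d_{D_m}(Fu,Fv)\le 4^{k}\cdot 4^{p}d_{L_n}(u,v)\quad\text{for all } u,v\in V(L_n).$$ Let $h\in\{1,\dots,n\}$ satisfy $\frac{4^h}{3}-1-4^k\ge 4^{h-1}$. Let $C_{4^h}$ be an isometric cycle of length $4^h$ in $L_n$, and let $FC_{4^h}$ be the closed walk in $D_m$ obtained by joining, for each edge $uv$ of $C_{4^h}$, the points $Fu$ and $Fv$ by a chosen shortest path in $D_m$. Then the subgraph of $D_m$ spanned by $FC_{4^h}$ contains a cycle whose length is between $4^{p+h-1}$ and $4^{p+h+k}$.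
   Context: All graphs are unweighted (each edge has length $1$) and carry the shortest-path metric. Diamond graphs: $D_0$ is a single edge; $D_m$ is obtained from $D_{m-1}$ by replacing every edge $uv$ by a quadrilateral $u,a,v,b$ with edges $ua,av,vb,bu$. Laakso graphs: $L_0$ is a single edge; $L_1$ is the graph with vertices $x_1,\dots,x_6$ and edges $x_1x_2,x_2x_3,x_2x_4,x_3x_5,x_4x_5,x_5x_6$; $L_n$ is obtained from $L_{n-1}$ by replacing each edge $uv$ by a copy of $L_1$ with $u,v$ identified with $x_1,x_6$. A cycle in $L_n$ is isometric if the distance in $L_n$ between any two of its vertices equals their distance along the cycle. *)

From mathcomp Require Import all_boot.
From mathcomp Require Import all_algebra.
Set Implicit Arguments. Unset Strict Implicit. Unset Printing Implicit Defensive.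

(* A finite undirected simple graph with vertex set {0,...,nv-1},
   given by a list of (unordered) edges. *)
Record graph := Graph { nv : nat; edges : seq (nat * nat) }.

Definition adj (G : graph) : rel nat :=
  fun u v => ((u, v) \in edges G) || ((v, u) \in edges G).

Definition edge_graph : graph := Graph 2 [:: (0, 1)].

Definition diamond_step (G : graph) : graph :=
  Graph (nv G + 2 * size (edges G))
    (flatten (mkseq (fun i =>
       let e := nth (0, 0) (edges G) i in
       let a := nv G + 2 * i in let b := a.+1 in
       [:: (e.1, a); (a, e.2); (e.2, b); (b, e.1)]) (size (edges G)))).

(* Laakso step: edge uv (the i-th edge) is replaced by a copy of L_1 with
   x1 = u, x6 = v and new vertices x2..x5 = nv+4i, ..., nv+4i+3. *)
Definition laakso_step (G : graph) : graph :=
  Graph (nv G + 4 * size (edges G))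
    (flatten (mkseq (fun i =>
       let e := nth (0, 0) (edges G) i in
       let x2 := nv G + 4 * i in let x3 := x2.+1 in
       let x4 := x2.+2 in let x5 := x2.+3 in
       [:: (e.1, x2); (x2, x3); (x2, x4); (x3, x5); (x4, x5); (x5, e.2)])
       (size (edges G)))).

Definition Diamond (m : nat) : graph := iter m diamond_step edge_graph.
Definition Laakso (n : nat) : graph := iter n laakso_step edge_graph.

(* a walk u = s_0, s_1, ..., s_l = v, stored as the list [s_1; ...; s_l];
   its length is size s *)
Definition walk (G : graph) (u : nat) (s : seq nat) (v : nat) : bool :=
  path (adj G) u s && (last u s == v).

Definition is_dist (G : graph) (u v d : nat) : Prop :=
  (exists s, walk G u s v /\ size s = d) /\
  (forall s, walk G u s v -> d <= size s).

Definition is_cycle (G : graph) (c : seq nat) : Prop :=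
  3 <= size c /\ uniq c /\ cycle (adj G) c.

Definition cyc_dist (N i j : nat) : nat :=
  minn (maxn i j - minn i j) (N - (maxn i j - minn i j)).

Definition isometric_cycle (G : graph) (c : seq nat) : Prop :=
  is_cycle G c /\
  forall i j, i < size c -> j < size c ->
    is_dist G (nth 0 c i) (nth 0 c j) (cyc_dist (size c) i j).

Definition walk_edges (u : nat) (s : seq nat) : seq (nat * nat) :=
  zip (u :: s) s.

Definition cycle_edges (c : seq nat) : seq (nat * nat) :=
  zip c (rot 1 c).

(* Suppose the subgraph H of D_m traced by FC had no cycle of length at least L = 4^(p+h-1); its
   simple cycles have at most as many edges as the walk, 4^h * 4^(k+p), so this is the only thing
   to rule out.  When all simple cycles are shorter than L, every vertex x of a simple path Q lies
   within L/2 of any path R closing Q up: the first stretch of R leaving Q after x and returning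
   before x closes a simple cycle through x.  Cut the closed walk FC into three arcs at the images
   of u_0, u_q, u_2q, where q = 4^(h-1) + 4^k + 1.  An intermediate value argument along the first
   arc gives a vertex close to both other arcs.  As every walk F(u)F(v) has length at most 4^(k+p),
   this produces vertices of C on the three arcs whose images are pairwise within
   4^(k+p) + 4^(p+h-1), hence which are pairwise within q - 1 along the isometric cycle C by the
   lower Lipschitz bound.  This is impossible, because 3q <= 4^h by the assumption on h. *)

From mathcomp Require Import all_boot all_algebra.
From mathcomp Require Import zify lra.
From Stdlib Require Import Classical.

Set Implicit Arguments.
Unset Strict Implicit.
Unset Printing Implicit Defensive.

Section Paths.

Variables (T : eqType) (e : rel T).

Definition reach (r : nat) (u v : T) :=
  exists s, [/\ path e u s, last u s = v & size s <= r].

Definition short_cycles (L : nat) :=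
  forall c, 3 <= size c -> uniq c -> cycle e c -> size c < L.

Lemma path_zip_all u s : path e u s = all [pred xy | e xy.1 xy.2] (zip (u :: s) s).
Proof. by elim: s u => //= v s IHs u; rewrite IHs. Qed.

Lemma cycle_zip_all c : cycle e c = all [pred xy | e xy.1 xy.2] (zip c (rot 1 c)).
Proof.
case: c => // u s; rewrite rot1_cons /= path_zip_all; congr all.
have zip_rcons x t : zip (x :: rcons t u) (rcons t u) = zip (x :: t) (rcons t u).
  by elim: t x => //= v t IHt x; rewrite IHt.
exact: zip_rcons.
Qed.

Lemma cycle_cat_path v K s :
  cycle e (v :: K ++ s) = path e v K && path e (last v K) (rcons s v).
Proof. by rewrite /= rcons_cat cat_path. Qed.

Lemma reach_refl r u : reach r u u.
Proof. by exists [::]. Qed.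

Lemma reach_edge u v : e u v -> reach 1 u v.
Proof. by move=> euv; exists [:: v]; rewrite /= euv. Qed.

Lemma reach_trans r1 r2 u v w : reach r1 u v -> reach r2 v w -> reach (r1 + r2) u w.
Proof.
move=> [s1 [p1 l1 z1]] [s2 [p2 l2 z2]].
by exists (s1 ++ s2); rewrite cat_path last_cat l1 p1 p2 l2 size_cat leq_add.
Qed.

Lemma path_split u s v y : path e u s -> last u s = v -> y \in s ->
  exists r1 r2, [/\ reach r1 u y, reach r2 y v & r1 + r2 = size s].
Proof.
move=> ps ls ys; case/splitPr: ys ps ls => s1 s2.
rewrite cat_path last_cat /= => /andP[p1 /andP[ey p2]] l.
exists (size s1).+1, (size s2); split; last by rewrite size_cat addSnnS.
- by exists (rcons s1 y); rewrite rcons_path p1 ey last_rcons size_rcons.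
- by exists s2.
Qed.

Lemma path_crossing (A B : pred T) u r :
  B u -> ~~ A u -> path e u r -> A (last u r) ->
  exists u' s v, [/\ B u', A v, path e u' (rcons s v),
    {subset u' :: rcons s v <= u :: r} & all (fun y => ~~ A y && ~~ B y) s].
Proof.
suff crossing s : B u -> all (fun y => ~~ A y && ~~ B y) s -> ~~ A (last u s) ->
    path e u (s ++ r) -> A (last u (s ++ r)) ->
    exists u' s' v, [/\ B u', A v, path e u' (rcons s' v),
      {subset u' :: rcons s' v <= u :: s ++ r} & all (fun y => ~~ A y && ~~ B y) s'].
  by move=> Bu nAu; apply: (crossing [::]).
elim: r u s => [|v r IHr] u s Bu Ns nAl; first by rewrite cats0 => _ Al; rewrite Al in nAl.
rewrite cat_path last_cat /= => /andP[ps /andP[ev pr]] Al.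
have sub_v t : {subset t <= v :: r} -> {subset t <= u :: s ++ v :: r}.
  by move=> sub y /sub yvr; rewrite in_cons mem_cat yvr !orbT.
case Av: (A v).
  exists u, s, v; split=> //; first by rewrite rcons_path ps ev.
  by move=> y; rewrite !inE mem_rcons inE mem_cat inE; case/or3P=> ->; rewrite ?orbT.
case Bv: (B v).
  have [u' [s' [v' [Bu' Av' p' sub Ns']]]] := IHr v [::] Bv isT (negbT Av) pr Al.
  by exists u', s', v'; split => //; apply: sub_v.
rewrite -cat_rcons; apply: IHr => //.
- by rewrite all_rcons /= Av Bv Ns.
- by rewrite last_rcons Av.
- by rewrite cat_path rcons_path ps ev last_rcons pr.
- by rewrite last_cat last_rcons.
Qed.

Lemma uniq_path_infix a Q A1 v K B2 : a :: Q = A1 ++ v :: K ++ B2 ->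
  path e a Q -> uniq (a :: Q) -> path e v K && uniq (v :: K).
Proof.
move=> EQ pQ uQ; have : sorted e (a :: Q) := pQ.
rewrite EQ sorted_cat_cons cat_path => /and3P[_ -> _].
by move: uQ; rewrite EQ cat_uniq -cat_cons cat_uniq => /and3P[_ _ /andP[]].
Qed.

Lemma uniq_path_crossing (A B : pred T) u r : {in B, forall y, ~~ A y} ->
  B u -> path e u r -> A (last u r) ->
  exists u' s v, [/\ B u', A v, path e u' (rcons s v) && uniq (u' :: rcons s v),
    {subset u' :: rcons s v <= u :: r} & all (fun y => ~~ A y && ~~ B y) s].
Proof.
move=> AB Bu pr Al; have [u' [s [v [Bu' Av puv sub Ns]]]] := path_crossing Bu (AB u Bu) pr Al.
have : last u' (rcons s v) = v by rewrite last_rcons.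
case: (shortenP puv) => p' pp' up' sub_p'.
case/lastP: p' pp' up' sub_p' => [|s' w] pp' up' sub_p' /=.
  by move=> u'v; move: (AB u' Bu'); rewrite u'v Av.
rewrite last_rcons => wv; subst w.
have s's : {subset s' <= s}.
  move=> y ys'; have := sub_p' y; rewrite !mem_rcons !inE ys' orbT => /(_ isT).
  by case: eqP => // yv; move: up'; rewrite /= rcons_uniq -yv ys' andbF.
exists u', s', v; split; rewrite ?pp' ?up' //; last by apply/allP => y /s's; apply: (allP Ns).
by move=> y; rewrite !inE !mem_rcons !inE => /or3P[/eqP->|/eqP->|/s's ys];
  apply: sub; rewrite !inE ?mem_rcons ?inE ?ys ?eqxx ?orbT.
Qed.

Lemma path_switch (P2 P3 : T -> Prop) x s :
  path e x s -> P3 x -> P2 (last x s) -> (forall y, y \in x :: s -> P2 y \/ P3 y) ->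
  exists y y', [/\ y \in x :: s, P3 y, P2 y' & reach 1 y y'].
Proof.
elim: s x => [|v s IHs] x /=.
  by move=> _ P3x P2x _; exists x, x; split; rewrite ?mem_head //; exact: reach_refl.
move=> /andP[exv pv] P3x P2l cover.
have [P2v|P3v] : P2 v \/ P3 v by apply: cover; rewrite !inE eqxx orbT.
  by exists x, v; split; rewrite ?mem_head //; exact: reach_edge.
have [y [y' [ys P3y P2y' yy']]] : exists y y', [/\ y \in v :: s, P3 y, P2 y' & reach 1 y y'].
  by apply: IHs => // y ys; apply: cover; rewrite inE ys orbT.
by exists y, y'; split; rewrite // inE ys orbT.
Qed.

Hypothesis esym : symmetric e.

Lemma reach_sym r u v : reach r u v -> reach r v u.
Proof.
move=> [s [ps <- sz]]; exists (rev (belast u s)).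
rewrite rev_path size_rev size_belast; split => //.
  by apply: sub_path ps => x y; rewrite /= esym.
by rewrite -(last_cons u) -rev_rcons -lastI rev_cons last_rcons.
Qed.

Lemma path_near_end u s v y : path e u s -> last u s = v -> y \in s ->
  exists r, (reach r y u \/ reach r y v) /\ 2 * r <= size s.
Proof.
move=> ps ls ys; have [r1 [r2 [uy yv <-]]] := path_split ps ls ys.
case: (leqP r1 r2) => r12.
  by exists r1; rewrite mul2n -addnn leq_add2l; split => //; left; apply: reach_sym.
by exists r2; rewrite mul2n -addnn leq_add2r ltnW //; split => //; right.
Qed.

Lemma short_cycles_closed_path L v K s : short_cycles L -> 2 <= size K ->
  path e v K -> path e (last v K) (rcons s v) -> uniq (v :: K ++ s) -> size K < L.
Proof.
move=> short K2 pK ps uKs; have /short : 3 <= size (v :: K ++ s).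
  by rewrite /= size_cat ltnS (leq_trans K2) ?leq_addr.
rewrite cycle_cat_path pK ps /= size_cat => /(_ uKs isT).
by apply: leq_trans; rewrite ltnS leqW ?leq_addr.
Qed.

Lemma short_cycles_near_path L a Q b R x :
  short_cycles L -> path e a Q -> uniq (a :: Q) -> last a Q = b ->
  path e b R -> last b R = a -> x \in a :: Q -> x \notin b :: R ->
  exists y r, [/\ y \in b :: R, reach r x y & 2 * r < L].
Proof.
move=> short pQ uQ lQ pR lR xQ xR.
have aR : a \in b :: R by rewrite -lR mem_last.
have {}xQ : x \in Q by move: xQ; rewrite inE; case: eqP => // xa; rewrite xa aR in xR.
case/splitPr: xQ pQ uQ lQ => Q1 Q2 pQ uQ lQ.
have bQ2 : b \in Q2.
  have : b \in x :: Q2 by rewrite -lQ last_cat /= mem_last.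
  by rewrite inE; case: eqP => // bx; rewrite -bx mem_head in xR.
have Q2Q1 : {in Q2, forall y, y \notin a :: Q1}.
  by move: uQ; rewrite -cat_cons cat_uniq /= => /and3P[_ /norP[_ /hasPn]].
have lRQ1 : last b R \in a :: Q1 by rewrite lR mem_head.
have [u [s [v [uQ2 vQ1 /andP[puv usv] sub_uv Ns]]]] :=
  @uniq_path_crossing (mem (a :: Q1)) (mem Q2) b R Q2Q1 bQ2 pR lRQ1.
have {}uQ2 : u \in Q2 := uQ2; have {}vQ1 : v \in a :: Q1 := vQ1.
have [A1 [A2 EA]] : exists A1 A2, a :: Q1 = A1 ++ v :: A2.
  by case/splitPr: vQ1 => A1 A2; exists A1, A2.
have [B1 [B2 EB]] : exists B1 B2, Q2 = B1 ++ u :: B2.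
  by case/splitPr: uQ2 => B1 B2; exists B1, B2.
(* [v :: K] is the stretch of [a :: Q] from [v] to [u]; it passes through [x]. *)
pose K := A2 ++ x :: B1 ++ [:: u].
have EZ : a :: Q1 ++ x :: Q2 = A1 ++ v :: K ++ B2.
  by rewrite -cat_cons EA EB /K -catA /= -catA /= -catA.
have /andP[pK uK] := uniq_path_infix EZ pQ uQ.
have lK : last v K = u by rewrite /K last_cat /= last_cat.
have uKs : uniq (v :: K ++ s).
  have us : uniq s by move: usv; rewrite /= rcons_uniq => /and3P[].
  rewrite -cat_cons cat_uniq uK us andbT.
  apply/hasPn => y ys; apply/negP => yK.
  have /andP[yQ1 yQ2] : (y \notin a :: Q1) && (y \notin Q2) := allP Ns y ys.
  have : y \in a :: Q1 ++ x :: Q2 by rewrite EZ mem_cat -cat_cons mem_cat yK !orbT.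
  rewrite -cat_cons mem_cat (negPf yQ1) /= in_cons (negPf yQ2) orbF => /eqP yx.
  by move: xR; rewrite -yx sub_uv // inE mem_rcons inE ys !orbT.
have K2 : 2 <= size K by rewrite /K size_cat /= size_cat /= addnS ltnS ltn_addl // addn1.
have KL : size K < L by apply: short_cycles_closed_path short K2 pK _ uKs; rewrite lK.
have xK : x \in K by rewrite mem_cat mem_head orbT.
have [r [xvu rK]] := path_near_end pK lK xK.
have [y xy yR] : exists2 y, reach r x y & y \in b :: R.
  case: xvu => ?; [exists v | exists u] => //; apply: sub_uv.
  - by rewrite inE mem_rcons mem_head orbT.
  - exact: mem_head.
by exists y, r; split => //; apply: leq_ltn_trans KL.
Qed.

Lemma short_cycles_tripod L a1 a2 a3 R1 R2 R3 : 0 < L -> short_cycles L ->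
  path e a1 R1 -> last a1 R1 = a2 -> path e a2 R2 -> last a2 R2 = a3 ->
  path e a3 R3 -> last a3 R3 = a1 ->
  exists z w2 w3 r2 r3,
    [/\ z \in a1 :: R1, w2 \in a2 :: R2, w3 \in a3 :: R3, reach r2 z w2 & reach r3 z w3]
    /\ r2 + r3 <= L.
Proof.
move=> L0 short p1 l1 p2 l2 p3 l3; move: l1.
case: (shortenP p1) => Q pQ uQ sub1 lQ.
pose near (R : seq T) y := exists w r, [/\ w \in R, reach r y w & 2 * r < L].
have near_refl (R : seq T) y : y \in R -> near R y by exists y, 0; split => //; exact: reach_refl.
have pR : path e a2 (R2 ++ R3) by rewrite cat_path p2 l2 p3.
have lR : last a2 (R2 ++ R3) = a1 by rewrite last_cat l2 l3.
have arcs w : w \in a2 :: R2 ++ R3 -> w \in a2 :: R2 \/ w \in a3 :: R3.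
  rewrite inE mem_cat => /or3P[wa2|wR2|wR3].
  - by left; rewrite inE wa2.
  - by left; rewrite inE wR2 orbT.
  - by right; rewrite inE wR3 orbT.
have cover y : y \in a1 :: Q -> near (a2 :: R2) y \/ near (a3 :: R3) y.
  move=> yQ; case: (boolP (y \in a2 :: R2 ++ R3)) => [/arcs [] /near_refl|yR]; [by left|by right|].
  have [w [r [wR yw rL]]] := short_cycles_near_path short pQ uQ lQ pR lR yQ yR.
  by case: (arcs w wR) => wRi; [left|right]; exists w, r.
have near_a1 : near (a3 :: R3) a1 by apply: near_refl; rewrite -l3 mem_last.
have near_a2 : near (a2 :: R2) (last a1 Q) by rewrite lQ; apply: near_refl; rewrite mem_head.
have [z [z' [zQ [w3 [r3 [w3R zw3 r3L]]] [w2 [r2 [w2R z'w2 r2L]]] zz']]] :=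
  path_switch pQ near_a1 near_a2 cover.
exists z, w2, w3, (1 + r2), r3; split; last by clear -r2L r3L; lia.
split => //; last exact: reach_trans zz' z'w2.
by move: zQ; rewrite !inE => /orP[->|/sub1 ->]; rewrite ?orbT.
Qed.

End Paths.

Lemma reach_sub (T : eqType) (e e' : rel T) r u v :
  subrel e e' -> reach e r u v -> reach e' r u v.
Proof. by move=> ee' [s [ps ls sz]]; exists s; rewrite (sub_path ee' ps). Qed.

Lemma cyc_dist_three_arcs N d t1 t2 t3 :
  3 * d + 3 <= N -> t1 <= d.+1 <= t2 -> t2 <= 2 * d.+1 <= t3 -> t3 <= N ->
  ~ [/\ cyc_dist N t1 t2 <= d, cyc_dist N t1 t3 <= d & cyc_dist N t2 t3 <= d].
Proof.
move=> dN /andP[t1d dt2] /andP[t2d dt3] t3N [d12 d13 d23].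
by move: d12 d13 d23; rewrite /cyc_dist; lia.
Qed.

Section ClosedWalk.

Variables (T : eqType) (e : rel T) (N M L dl : nat) (st : nat -> T) (P : nat -> seq T).
Hypotheses (esym : symmetric e) (L_gt0 : 0 < L) (dl_small : 3 * dl + 3 <= N).
Hypothesis path_P : forall t, t < N -> path e (st t) (P t) /\ last (st t) (P t) = st t.+1.
Hypothesis size_P : forall t, t < N -> size (P t) <= M.
Hypothesis st_closed : st N = st 0.
Hypothesis st_far : forall t t' r, t <= N -> t' <= N ->
  reach e r (st t) (st t') -> r <= M + L -> cyc_dist N t t' <= dl.

Definition arc i d := flatten [seq P t | t <- iota i d].

Lemma arc_path i d : i + d <= N ->
  path e (st i) (arc i d) /\ last (st i) (arc i d) = st (i + d).
Proof.
elim: d => [|d IHd] idN; first by rewrite addn0.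
rewrite addnS in idN; have [pd ld] := IHd (ltnW idN); have [pt lt] := path_P idN.
rewrite /arc -[d.+1]addn1 iotaD map_cat flatten_cat /= cats0 -/(arc i d).
by rewrite cat_path last_cat ld pd pt lt addnA addn1.
Qed.

Lemma arc_near i d y : i + d <= N -> y \in st i :: arc i d ->
  exists t r, [/\ i <= t <= i + d, reach e r y (st t) & 2 * r <= M].
Proof.
move=> idN; rewrite inE => /orP[/eqP->|].
  by exists i, 0; split; rewrite ?leqnn ?leq_addr //; exact: reach_refl.
case/flatten_mapP => t; rewrite mem_iota => /andP[it td] yP.
have tN : t < N by apply: leq_trans td idN.
have [pt lt] := path_P tN.
have [r [yt rP]] := path_near_end esym pt lt yP.
have rM := leq_trans rP (size_P tN).
case: yt => [yt|yt'].
  by exists t, r; rewrite it ltnW.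
by exists t.+1, r; rewrite td ltnW.
Qed.

Theorem closed_walk_long_cycle : ~ short_cycles e L.
Proof.
move=> short.
have arc1 : 0 + dl.+1 <= N by lia.
have arc2 : dl.+1 + dl.+1 <= N by lia.
have arc3 : 2 * dl.+1 + (N - 2 * dl.+1) <= N by lia.
have [p1 l1] := arc_path arc1; have [p2 l2] := arc_path arc2; have [p3 l3] := arc_path arc3.
rewrite add0n in l1; rewrite addnn -mul2n in l2; rewrite subnKC ?st_closed in l3; last by lia.
have [z [w2 [w3 [r2 [r3 [[zR1 w2R w3R zw2 zw3] r23]]]]]] :=
  short_cycles_tripod esym L_gt0 short p1 l1 p2 l2 p3 l3.
have [t1 [r1 [/andP[_ t1q] zt1 r1M]]] := arc_near arc1 zR1.
have [t2 [r2' [/andP[qt2 t2q] w2t2 r2M]]] := arc_near arc2 w2R.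
have [t3 [r3' [/andP[qt3 t3N] w3t3 r3M]]] := arc_near arc3 w3R.
apply: (@cyc_dist_three_arcs N dl t1 t2 t3); rewrite ?qt2 ?qt3 //=; try lia; split.
- by apply: (st_far _ _ (reach_trans (reach_trans (reach_sym esym zt1) zw2) w2t2)); lia.
- by apply: (st_far _ _ (reach_trans (reach_trans (reach_sym esym zt1) zw3) w3t3)); lia.
- apply: (st_far _ _ (reach_trans (reach_trans (reach_sym esym w2t2) (reach_sym esym zw2))
    (reach_trans zw3 w3t3))); lia.
Qed.

End ClosedWalk.

Lemma adj_sym G : symmetric (adj G).
Proof. by move=> u v; rewrite /adj orbC. Qed.

Lemma reach_is_dist G r u v : reach (adj G) r u v -> exists2 d, is_dist G u v d & d <= r.
Proof.
elim: r => [|r IHr] [s [ps ls sz]].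
  exists 0 => //; split=> [|s' _]; last exact: leq0n.
  by exists s; rewrite /walk ps ls eqxx; move: sz; rewrite leqn0 => /eqP.
case: (classic (reach (adj G) r u v)) => [/IHr[d dist dr]|far].
  by exists d; rewrite ?(leq_trans dr).
exists r.+1 => //; split.
  exists s; rewrite /walk ps ls eqxx; split => //; apply/eqP; rewrite eqn_leq sz ltnNge.
  by apply/negP => sr; apply: far; exists s.
by move=> s' /andP[ps' /eqP ls']; rewrite ltnNge; apply/negP => s'r; apply: far; exists s'.
Qed.

Lemma Laakso_edge_lt n x y : (x, y) \in edges (Laakso n) ->
  x < nv (Laakso n) /\ y < nv (Laakso n).
Proof.
elim: n x y => [|n IHn] x y; first by rewrite inE => /eqP[-> ->].
rewrite /Laakso iterS -/(Laakso n) /laakso_step /= /mkseq => /flatten_mapP[i].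
rewrite mem_iota add0n => /andP[_ iE].
have := mem_nth (0, 0) iE; case: nth => a b /IHn.
set E := edges (Laakso n) in iE *; set nL := nv (Laakso n); clearbody E nL => -[a_lt b_lt].
by rewrite !inE /= => /or4P[|||/or3P[||]] /eqP[-> ->]; split; lia.
Qed.

Lemma Laakso_adj_lt n x y : adj (Laakso n) x y -> x < nv (Laakso n).
Proof. by case/orP => /Laakso_edge_lt[]. Qed.

Lemma nth_cycle_edges c i : i < size c ->
  nth (0, 0) (cycle_edges c) i = (nth 0 c i, nth 0 c (if i.+1 < size c then i.+1 else 0)).
Proof.
case: c => // x s ilt; rewrite /cycle_edges rot1_cons nth_zip ?size_rcons // nth_rcons /= ltnS.
case: ltnP => // si; have -> : i = size s by move: ilt; rewrite /= ltnS; lia.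
by rewrite eqxx.

Qed.

Lemma uniq_cycle_size_le (c : seq nat) (W : seq (nat * nat)) : 3 <= size c -> uniq c ->
  (forall x y, (x, y) \in cycle_edges c -> ((x, y) \in W) || ((y, x) \in W)) ->
  size c <= size W.
Proof.
move=> c3 uc cW; set n := size c.
pose succ i := if i.+1 < n then i.+1 else 0.
have succ_lt i : i < n -> succ i < n by rewrite /succ; case: ifP => // _; lia.
pose unord (xy : nat * nat) := (minn xy.1 xy.2, maxn xy.1 xy.2).
pose g i := unord (nth 0 c i, nth 0 c (succ i)).
have sce : size (cycle_edges c) = n by rewrite size_zip size_rot minnn.
have gW i : i \in iota 0 n -> g i \in map unord W.
  rewrite mem_iota => /andP[_ ilt].
  have ci : (nth 0 c i, nth 0 c (succ i)) \in cycle_edges c.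
    by rewrite -nth_cycle_edges // mem_nth ?sce.
  case/orP: (cW _ _ ci) => xyW; first exact: (map_f unord xyW).
  by rewrite /g /unord /= minnC maxnC; apply: (map_f unord xyW).
have nth_inj i j : i < n -> j < n -> nth 0 c i = nth 0 c j -> i = j.
  by move=> ilt jlt; move/eqP; rewrite nth_uniq // => /eqP.
have ug : uniq (map g (iota 0 n)).
  rewrite map_inj_in_uniq ?iota_uniq // => i j.
  rewrite !mem_iota !add0n => /andP[_ ilt] /andP[_ jlt].
  rewrite /g /unord /= => -[E1 E2].
  have [[/nth_inj-> //]|[/nth_inj ij /nth_inj ji]] :
      (nth 0 c i = nth 0 c j /\ nth 0 c (succ i) = nth 0 c (succ j)) \/
      (nth 0 c i = nth 0 c (succ j) /\ nth 0 c (succ i) = nth 0 c j) by lia.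
  by move: (ij ilt (succ_lt j jlt)) (ji (succ_lt i ilt) jlt); rewrite /succ; do 2 case: ifP; lia.
have := uniq_leq_size ug; rewrite size_map size_iota => /(_ (map unord W)); rewrite size_map.
by apply => _ /mapP[i ii ->]; exact: gW.
Qed.

Lemma cyc_dist_mod N t t' : t <= N -> t' <= N ->
  cyc_dist N (t %% N) (t' %% N) = cyc_dist N t t'.
Proof.
have modN x : x <= N -> x %% N = if x == N then 0 else x.
  by rewrite leq_eqVlt => /orP[/eqP->|xN]; rewrite ?modnn ?eqxx // modn_small // ltn_eqF.
move=> tN t'N; rewrite !modN //; rewrite /cyc_dist.
by case: eqP tN => [->|_] ?; case: eqP t'N => [->|_] ?; lia.
Qed.

Lemma size_flatten_le (T : Type) (ss : seq (seq T)) M :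
  all (fun s => size s <= M) ss -> size (flatten ss) <= size ss * M.
Proof. by elim: ss => //= s ss IHss /andP[sM /IHss ssM]; rewrite size_cat mulSn leq_add. Qed.

Section Embedding.

Variables (n m k p l : nat) (F : nat -> nat) (c : seq nat) (P : nat -> seq nat).
Hypothesis bilip : forall u v du dv,
  u < nv (Laakso n) -> v < nv (Laakso n) ->
  is_dist (Laakso n) u v du -> is_dist (Diamond m) (F u) (F v) dv ->
  4 ^ p * du <= dv <= 4 ^ k * 4 ^ p * du.
Hypothesis c_isometric : isometric_cycle (Laakso n) c.
Hypothesis P_geodesic : forall i, i < size c ->
  let a := F (nth 0 c i) in
  let b := F (nth 0 c (i.+1 %% size c)) in
  walk (Diamond m) a (P i) b /\ is_dist (Diamond m) a b (size (P i)).

Local Notation N := (size c).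
Local Notation M := (4 ^ k * 4 ^ p).
Let st t := F (nth 0 c (t %% N)).
Let W := flatten [seq walk_edges (F (nth 0 c i)) (P i) | i <- iota 0 N].
Let adjW := [rel x y | ((x, y) \in W) || ((y, x) \in W)].

Lemma N_ge3 : 3 <= N.
Proof. by case: c_isometric => -[]. Qed.

Lemma cycle_vertex_lt i : i < N -> nth 0 c i < nv (Laakso n).
Proof.
case: c_isometric => -[_ [_ cyc]] _ iN.
exact: Laakso_adj_lt (next_cycle cyc (mem_nth 0 iN)).
Qed.

Lemma P_size t : t < N -> size (P t) <= M.
Proof.
move=> tN; have [_ dist_P] := P_geodesic tN.
have N0 : 0 < N by apply: leq_trans N_ge3.
have dist1 : is_dist (Laakso n) (nth 0 c t) (nth 0 c (t.+1 %% N)) 1.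
  have -> : 1 = cyc_dist N t (t.+1 %% N).
    rewrite -{1}(modn_small tN) cyc_dist_mod //; have := N_ge3; rewrite /cyc_dist; lia.
  by apply: c_isometric.2; rewrite ?ltn_pmod.
have /andP[_] := bilip (cycle_vertex_lt tN) (cycle_vertex_lt (ltn_pmod t.+1 N0)) dist1 dist_P.
by rewrite muln1.
Qed.

Lemma W_adj x y : (x, y) \in W -> adj (Diamond m) x y.
Proof.
case/flatten_mapP => t; rewrite mem_iota add0n => /andP[_ tN] xyP.
have [/andP[pP _] _] := P_geodesic tN.
by move: pP; rewrite path_zip_all => /allP/(_ _ xyP).
Qed.

Lemma P_path t : t < N -> path adjW (st t) (P t) /\ last (st t) (P t) = st t.+1.
Proof.
move=> tN; have [/andP[_ /eqP lP] _] := P_geodesic tN.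
rewrite /st (modn_small tN) lP; split => //; rewrite path_zip_all; apply/allP => xy xyP.
by apply/orP; left; apply/flatten_mapP; exists t; rewrite ?mem_iota // -surjective_pairing.
Qed.

Lemma adjW_adj : subrel adjW (adj (Diamond m)).
Proof. by move=> x y /orP[/W_adj //|/W_adj]; rewrite adj_sym. Qed.

Lemma st_far t t' r : t <= N -> t' <= N ->
  reach adjW r (st t) (st t') -> r <= M + 4 ^ p * l -> cyc_dist N t t' <= l + 4 ^ k.
Proof.
move=> tN t'N /(reach_sub adjW_adj)/reach_is_dist[dv dist_dv dvr] rML.
have N0 : 0 < N by apply: leq_trans N_ge3.
have [tN' t'N'] := (ltn_pmod t N0, ltn_pmod t' N0).
have := bilip (cycle_vertex_lt tN') (cycle_vertex_lt t'N') (c_isometric.2 _ _ tN' t'N') dist_dv.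
rewrite cyc_dist_mod // => /andP[lower _].
rewrite -(leq_pmul2l (expn_gt0 4 p)) (leq_trans lower) // (leq_trans dvr) //.
by rewrite (leq_trans rML) // mulnDr addnC (mulnC (4 ^ k)).
Qed.

Lemma size_W : size W <= N * M.
Proof.
have := @size_flatten_le _ [seq walk_edges (F (nth 0 c i)) (P i) | i <- iota 0 N] M.
rewrite size_map size_iota; apply; apply/allP => ? /mapP[t]; rewrite mem_iota => /andP[_ tN] ->.
by rewrite /walk_edges size_zip /= (minn_idPr (leqnSn _)) P_size.
Qed.

Theorem image_walk_long_cycle : 0 < l -> 3 * (l + 4 ^ k) + 3 <= N ->
  exists c', [/\ is_cycle (Diamond m) c',
    forall x y, (x, y) \in cycle_edges c' -> ((x, y) \in W) || ((y, x) \in W)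
    & 4 ^ p * l <= size c' <= N * M].
Proof.
move=> l_gt0 lN; apply: NNPP => none.
apply: (@closed_walk_long_cycle _ adjW N M (4 ^ p * l) (l + 4 ^ k) st P) => //.
- by move=> x y; rewrite /= orbC.
- by rewrite muln_gt0 expn_gt0.
- exact: P_path.
- exact: P_size.
- by rewrite /st modnn mod0n.
- exact: st_far.
move=> c' c3 uc cyc; rewrite ltnNge; apply/negP => Lc; apply: none; exists c'.
have ce : forall x y, (x, y) \in cycle_edges c' -> adjW x y.
  by move: cyc; rewrite cycle_zip_all => /allP ce x y /ce.
split => //.
  by split; last split; last apply: sub_cycle adjW_adj _ cyc.
by rewrite Lc (leq_trans (uniq_cycle_size_le c3 uc ce)) // size_W.
Qed.

End Embedding.

Import GRing.Theory Num.Theory.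
Local Open Scope ring_scope.

Theorem claim2p5 (n m k p : nat) (F : nat -> nat)
  (Hn : (1 <= n)%N) (Hm : (1 <= m)%N) (Hk : (1 <= k)%N)
  (HF : forall u, (u < nv (Laakso n))%N -> (F u < nv (Diamond m))%N)
  (Hbil : forall u v du dv,
     (u < nv (Laakso n))%N -> (v < nv (Laakso n))%N ->
     is_dist (Laakso n) u v du -> is_dist (Diamond m) (F u) (F v) dv ->
     (4 ^ p * du <= dv <= 4 ^ k * 4 ^ p * du)%N)
  (h : nat) (Hh1 : (1 <= h)%N) (Hhn : (h <= n)%N)
  (Hh : ((4 ^ (h - 1))%:R : rat) <= (4 ^ h)%:R / 3 - 1 - (4 ^ k)%:R)
  (c : seq nat) (Hcsize : size c = (4 ^ h)%N)
  (Hc : isometric_cycle (Laakso n) c)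
  (P : nat -> seq nat)
  (HP : forall i, (i < size c)%N ->
     let a := F (nth 0%N c i) in
     let b := F (nth 0%N c (i.+1 %% size c)) in
     walk (Diamond m) a (P i) b /\ is_dist (Diamond m) a b (size (P i))) :
  let W := flatten [seq walk_edges (F (nth 0%N c i)) (P i) | i <- iota 0 (size c)] in
  exists c' : seq nat,
    is_cycle (Diamond m) c' /\
    (forall x y, (x, y) \in cycle_edges c' -> ((x, y) \in W) || ((y, x) \in W)) /\
    (4 ^ (p + h - 1) <= size c' <= 4 ^ (p + h + k))%N.
Proof.
have c_long : (3 * (4 ^ (h - 1) + 4 ^ k) + 3 <= size c)%N.
  by rewrite Hcsize -(ler_nat rat) !natrD; lra.
have [c' [c'_cycle c'_edges c'_size]] :=
  image_walk_long_cycle Hbil Hc HP (expn_gt0 4 (h - 1)) c_long.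
exists c'; split => //; split => //.
have exp_sum : (p + h + k = h + (k + p))%N by rewrite addnAC addnC [(p + k)%N]addnC.
by rewrite -expnD addnBA // Hcsize -!expnD -exp_sum in c'_size.
Qed.
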